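(* Let $D$ be a connected locally finite C-homogeneous digraph such that $N^+(x)$ and $N^-(x)$ are independent sets for all $x\in VD$. If $D$ contains a directed triangle as a subdigraph, then $|N^+(x)|=|N^-(x)|$ for every $x\in VD$.
   Context: A digraph has an irreflexive, antisymmetric edge relation; connectedness and local finiteness refer to the underlying undirected graph. $D$ is C-homogeneous if every isomorphism between finite connected induced subdigraphs extends to an automorphism of $D$. $N^+(x)=\{y: xy\in ED\}$, $N^-(x)=\{y: yx\in ED\}$; a set is independent if no two of its vertices are adjacent. *)

From Stdlib Require Import List Relations.
Import ListNotations.

Section Digraph.
Context {V : Type} (E : V -> V -> Prop).

Definition is_digraph : Prop :=
  (forall x, ~ E x x) /\ (forall x y, E x y -> ~ E y x).

Definition adj (x y : V) : Prop := E x y \/ E y x.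

Definition out_nbr (x : V) : V -> Prop := fun y => E x y.
Definition in_nbr (x : V) : V -> Prop := fun y => E y x.

Definition connected : Prop := forall x y, clos_refl_trans V adj x y.

Definition locally_finite : Prop :=
  forall x, exists l : list V, forall y, adj x y -> In y l.

Definition independent (A : V -> Prop) : Prop :=
  forall x y, A x -> A y -> ~ adj x y.

Definition finite_set (A : V -> Prop) : Prop :=
  exists l : list V, forall x, A x -> In x l.

Definition induced_connected (A : V -> Prop) : Prop :=
  forall x y, A x -> A y ->
    clos_refl_trans V (fun a b => A a /\ A b /\ adj a b) x y.

Definition induced_iso (A B : V -> Prop) (f : V -> V) : Prop :=
  (forall x, A x -> B (f x)) /\
  (forall x y, A x -> A y -> f x = f y -> x = y) /\
  (forall y, B y -> exists x, A x /\ f x = y) /\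
  (forall x y, A x -> A y -> (E x y <-> E (f x) (f y))).

Definition automorphism (g : V -> V) : Prop :=
  (forall x y, g x = g y -> x = y) /\
  (forall y, exists x, g x = y) /\
  (forall x y, E x y <-> E (g x) (g y)).

Definition C_homogeneous : Prop :=
  forall (A B : V -> Prop) (f : V -> V),
    finite_set A -> finite_set B ->
    induced_connected A -> induced_connected B ->
    induced_iso A B f ->
    exists g, automorphism g /\ forall x, A x -> g x = f x.

Definition has_card (P : V -> Prop) (n : nat) : Prop :=
  exists l : list V, NoDup l /\ (forall y, P y <-> In y l) /\ length l = n.

Definition has_directed_triangle : Prop :=
  exists a b c, E a b /\ E b c /\ E c a.

End Digraph.

From Stdlib Require Import List Relations.
From Stdlib Require Import ClassicalEpsilon Arith Lia.
Import ListNotations.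

(* C-homogeneity applied to the connected subdigraph spanned by an arc makes
   [D] arc-transitive, so every arc [u -> v] lies in the same number [t] of
   directed triangles [u -> v -> w -> u], and [t > 0] because [D] contains a
   directed triangle.  Counting the directed triangles [x -> y -> z -> x]
   through a vertex [x] by the out-neighbour [y] gives [|N+(x)| * t], and by
   the in-neighbour [z] gives [|N-(x)| * t]. *)

Definition dec (P : Prop) : bool :=
  if excluded_middle_informative P then true else false.

Lemma decP (P : Prop) : dec P = true <-> P.
Proof.
  unfold dec; destruct (excluded_middle_informative P); intuition congruence.
Qed.

Lemma NoDup_same_length {T : Type} (l1 l2 : list T) :
  NoDup l1 -> NoDup l2 -> (forall a, In a l1 <-> In a l2) ->
  length l1 = length l2.
Proof.
  intros H1 H2 H.
  apply Nat.le_antisymm; apply NoDup_incl_length; auto;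
    intros a Ha; apply H; auto.
Qed.

Lemma NoDup_list_prod {A B : Type} (la : list A) (lb : list B) :
  NoDup la -> NoDup lb -> NoDup (list_prod la lb).
Proof.
  intros Ha Hb; induction Ha as [|a la Ha_notin Ha IH]; simpl; [constructor|].
  apply NoDup_app; auto.
  - apply NoDup_map_NoDup_ForallPairs; auto.
    intros b b' _ _ Heq; injection Heq; auto.
  - intros [a' b] Hmap Hprod.
    apply in_map_iff in Hmap as [? [Heq _]]; injection Heq as <- _.
    apply in_prod_iff in Hprod as [? _]; contradiction.
Qed.

Definition related_pairs {A B : Type} (R : A -> B -> Prop)
    (la : list A) (lb : list B) : list (A * B) :=
  filter (fun p => dec (R (fst p) (snd p))) (list_prod la lb).

Lemma length_related_pairs {A B : Type} (R : A -> B -> Prop)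
    (la : list A) (lb : list B) (t : nat) :
  (forall a, In a la -> length (filter (fun b => dec (R a b)) lb) = t) ->
  length (related_pairs R la lb) = length la * t.
Proof.
  unfold related_pairs; induction la as [|a la IH]; intros Hdeg; simpl; auto.
  rewrite filter_app, length_app, filter_map_swap, length_map; simpl.
  rewrite IH, Hdeg; simpl; auto.
  intros a' Ha'; apply Hdeg; right; auto.
Qed.

Lemma double_counting {A B : Type} (R : A -> B -> Prop)
    (la : list A) (lb : list B) (t : nat) :
  0 < t -> NoDup la -> NoDup lb ->
  (forall a, In a la -> length (filter (fun b => dec (R a b)) lb) = t) ->
  (forall b, In b lb -> length (filter (fun a => dec (R a b)) la) = t) ->
  length la = length lb.
Proof.
  intros Ht Ha Hb Hdeg_a Hdeg_b.
  set (swap := fun p : B * A => (snd p, fst p)).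
  assert (Hpairs : length (related_pairs R la lb) =
                   length (map swap (related_pairs (fun b a => R a b) lb la))).
  { apply NoDup_same_length.
    - apply NoDup_filter, NoDup_list_prod; auto.
    - apply NoDup_map_NoDup_ForallPairs.
      + intros [b a] [b' a'] _ _ Heq; injection Heq as -> ->; auto.
      + apply NoDup_filter, NoDup_list_prod; auto.
    - intros [a b]; unfold related_pairs.
      rewrite in_map_iff, filter_In, in_prod_iff, decP; simpl; split.
      + intros [[Hina Hinb] Hab]; exists (b, a).
        rewrite filter_In, in_prod_iff, decP; auto.
      + intros [[b' a'] [Heq Hin]]; injection Heq as -> ->.
        rewrite filter_In, in_prod_iff, decP in Hin; simpl in Hin; tauto. }
  rewrite length_map in Hpairs.
  rewrite (length_related_pairs R _ _ t Hdeg_a) in Hpairs.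
  rewrite (length_related_pairs (fun b a => R a b) _ _ t Hdeg_b) in Hpairs.
  apply Nat.mul_cancel_r with t; lia.
Qed.

Section FiniteSets.
Variable V : Type.

Lemma finite_has_card (P : V -> Prop) :
  finite_set P -> exists n, has_card P n.
Proof.
  intros [l Hl].
  set (eq_dec := fun x y : V => excluded_middle_informative (x = y)).
  exists (length (filter (fun w => dec (P w)) (nodup eq_dec l))),
         (filter (fun w => dec (P w)) (nodup eq_dec l)).
  split; [apply NoDup_filter, NoDup_nodup|split; auto].
  intro w; rewrite filter_In, nodup_In, decP; intuition.
Qed.

Lemma has_card_length (P : V -> Prop) (n : nat) (l : list V) :
  has_card P n -> NoDup l -> (forall w, P w <-> In w l) -> length l = n.
Proof.
  intros [l' [Hl' [HP <-]]] Hl Hmem; apply NoDup_same_length; auto.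
  intro w; rewrite <- Hmem, HP; tauto.
Qed.

Lemma has_card_filter (P Q : V -> Prop) (n : nat) (l : list V) :
  has_card P n -> NoDup l -> (forall w, P w <-> In w l /\ Q w) ->
  length (filter (fun w => dec (Q w)) l) = n.
Proof.
  intros Hcard Hl HP.
  apply (has_card_length P); [auto|apply NoDup_filter; auto|].
  intro w; rewrite filter_In, decP; auto.
Qed.

Lemma has_card_bij (g : V -> V) (P Q : V -> Prop) (n : nat) :
  (forall x y, g x = g y -> x = y) -> (forall y, exists x, g x = y) ->
  (forall w, P w <-> Q (g w)) ->
  has_card P n -> has_card Q n.
Proof.
  intros Hinj Hsurj HPQ [l [Hl [HP <-]]].
  exists (map g l); split; [|split].
  - apply NoDup_map_NoDup_ForallPairs; auto; intros x y _ _; apply Hinj.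
  - intro y; destruct (Hsurj y) as [w <-]; rewrite in_map_iff, <- HPQ, HP.
    split; [eauto|intros [w' [Hw' Hin]]; apply Hinj in Hw' as ->; auto].
  - apply length_map.
Qed.

End FiniteSets.

Section ArcTransitivity.
Variables (V : Type) (E : V -> V -> Prop).
Hypotheses (HD : is_digraph E) (HC : C_homogeneous E).

Lemma arc_induced_connected (a b : V) :
  E a b -> induced_connected E (fun w => w = a \/ w = b).
Proof.
  intros Hab x y [->| ->] [->| ->]; try apply rt_refl; apply rt_step;
    unfold adj; auto.
Qed.

Lemma C_homogeneous_arc_transitive (u v u' v' : V) :
  E u v -> E u' v' ->
  exists g, automorphism E g /\ g u = u' /\ g v = v'.
Proof.
  destruct HD as [Hirr Hasym]; intros Huv Huv'.
  set (f := fun w => if excluded_middle_informative (w = u) then u' else v').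
  assert (fu : f u = u').
  { unfold f; destruct (excluded_middle_informative (u = u)); congruence. }
  assert (fv : f v = v').
  { unfold f; destruct (excluded_middle_informative (v = u)) as [->|]; auto.
    exfalso; eapply Hirr; eauto. }
  destruct (HC (fun w => w = u \/ w = v) (fun w => w = u' \/ w = v') f)
    as [g [Hg Hgf]].
  - exists [u; v]; intros x [->| ->]; simpl; auto.
  - exists [u'; v']; intros x [->| ->]; simpl; auto.
  - apply arc_induced_connected; auto.
  - apply arc_induced_connected; auto.
  - split; [|split; [|split]].
    + intros x [->| ->]; [rewrite fu | rewrite fv]; auto.
    + intros x y [->| ->] [->| ->]; rewrite ?fu, ?fv; auto; intros ->;
        exfalso; eapply Hirr; eauto.
    + intros y [->| ->]; [exists u | exists v]; auto.
    + intros x y [->| ->] [->| ->]; rewrite ?fu, ?fv; split; intro H; auto;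
        exfalso; first [eapply Hirr; eassumption | eapply Hasym; eassumption].
  - exists g; split; [|split]; auto; rewrite Hgf; auto.
Qed.

Definition closes_triangle (u v w : V) : Prop := E v w /\ E w u.

Lemma arc_triangle_count :
  locally_finite E -> has_directed_triangle E ->
  exists t, 0 < t /\ forall u v, E u v -> has_card (closes_triangle u v) t.
Proof.
  intros Hlf [a [b [c [Hab [Hbc Hca]]]]].
  destruct (finite_has_card V (closes_triangle a b)) as [t Ht].
  { destruct (Hlf a) as [l Hl]; exists l.
    intros w [_ Hwa]; apply Hl; right; auto. }
  exists t; split.
  - destruct Ht as [[|w l] [_ [Hmem <-]]]; simpl; [|auto with arith].
    exfalso; apply (Hmem c); split; auto.
  - intros u v Huv.
    destruct (C_homogeneous_arc_transitive a b u v Hab Huv)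
      as [g [[Hinj [Hsurj Hiso]] [<- <-]]].
    apply (has_card_bij V g (closes_triangle a b)); auto.
    intro w; unfold closes_triangle; rewrite (Hiso b w), (Hiso w a); tauto.
Qed.

End ArcTransitivity.

Arguments closes_triangle {V} E u v w.

Theorem lemma4p11 (V : Type) (E : V -> V -> Prop) :
  is_digraph E ->
  connected E ->
  locally_finite E ->
  C_homogeneous E ->
  (forall x, independent E (out_nbr E x) /\ independent E (in_nbr E x)) ->
  has_directed_triangle E ->
  forall x : V, exists n : nat,
    has_card (out_nbr E x) n /\ has_card (in_nbr E x) n.
Proof.
  intros HD _ Hlf HC _ Htri x.
  destruct (arc_triangle_count V E HD HC Hlf Htri) as [t [Ht Hcount]].
  destruct (Hlf x) as [l Hl].
  destruct (finite_has_card V (out_nbr E x)) as [n_out [lo [Hlo [Hmo <-]]]].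
  { exists l; intros y Hy; apply Hl; left; auto. }
  destruct (finite_has_card V (in_nbr E x)) as [n_in [li [Hli [Hmi <-]]]].
  { exists l; intros y Hy; apply Hl; right; auto. }
  assert (Hlen : length lo = length li).
  { apply (double_counting E lo li t); auto.
    - intros y Hy; apply (has_card_filter V (closes_triangle E x y)).
      + apply Hcount, Hmo; auto.
      + auto.
      + intro z; unfold closes_triangle; rewrite <- Hmi; unfold in_nbr; tauto.
    - intros z Hz; apply (has_card_filter V (closes_triangle E z x)).
      + apply Hcount, Hmi; auto.
      + auto.
      + intro y; unfold closes_triangle; rewrite <- Hmo; unfold out_nbr.
        tauto. }
  exists (length lo); split; [exists lo | exists li]; auto.
Qed.
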